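(* In the linear deterministic diamond network with a disturbing node with gains $n_1,n_2,n_3,n_4,m$, suppose $n_1=n_2$ and $m\ge n_1$. Then $R(G_A,G_B)=0$ for every choice of $G_A,G_B$; in particular the linear capacity is $C=0$.
   Context: The shift matrix $Q$ is the $q\times q$ matrix over $\mathbb{F}_2$ with $Q_{i+1,i}=1$ for $1\le i\le q-1$ and all other entries $0$, where $q=\max(n_1,n_2,n_3,n_4,m)$ and all gains are nonnegative integers. Network: source $S$, relays $A,B$, destination $D$, disturbing node $M$; gains $n_1$ ($S\to A$), $n_2$ ($S\to B$), $n_3$ ($A\to D$), $n_4$ ($B\to D$), $m$ ($M\to A$ and $M\to B$). Each node transmits $x_i\in\mathbb{F}_2^q$ and receives $y_j=\sum_{k:(k,j)\text{ an edge}}Q^{q-n_{(k,j)}}x_k$; relays use linear maps $x_A=G_Ay_A$, $x_B=G_By_B$ with $G_A,G_B$ arbitrary $q\times q$ matrices over $\mathbb{F}_2$. Then $y_D=G_Sx_S+G_Mx_M$ with $G_S=Q^{q-n_3}G_AQ^{q-n_1}+Q^{q-n_4}G_BQ^{q-n_2}$ and $G_M=Q^{q-n_3}G_AQ^{q-m}+Q^{q-n_4}G_BQ^{q-m}$. The rate $R(G_A,G_B)$ is the maximum dimension of a subspace $\mathcal{X}\subseteq\mathbb{F}_2^q$ such that for all $x_S,x_S'\in\mathcal{X}$, $x_M,x_M'\in\mathbb{F}_2^q$, $G_Sx_S+G_Mx_M=G_Sx_S'+G_Mx_M'$ implies $x_S=x_S'$. The linear capacity is $C=\max_{G_A,G_B}R(G_A,G_B)$.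 *)

From HB Require Import structures.
From mathcomp Require Import all_boot all_order all_algebra.
Unset Strict Implicit. Unset Printing Implicit Defensive.
Import GRing.Theory.
Local Open Scope ring_scope.

Notation F2 := 'F_2.

Definition qdim (n1 n2 n3 n4 m : nat) : nat :=
  maxn n1 (maxn n2 (maxn n3 (maxn n4 m))).

(* Shift matrix: Q_{i+1,i} = 1 (1-indexed), i.e. entry (i,j) is 1 iff i = j+1
   (0-indexed). *)
Definition shiftQ (q : nat) : 'M[F2]_q :=
  \matrix_(i < q, j < q) (if nat_of_ord i == (nat_of_ord j).+1 then 1 else 0).

Definition mxpow {q : nat} (A : 'M[F2]_q) (k : nat) : 'M[F2]_q :=
  iter k (mulmx A) 1%:M.

Section Network.
Variables n1 n2 n3 n4 m : nat.
Local Notation q := (qdim n1 n2 n3 n4 m).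
Local Notation Q := (shiftQ q).

Definition Qp (n : nat) : 'M[F2]_q := mxpow Q (q - n).

Definition GS (GA GB : 'M[F2]_q) : 'M[F2]_q :=
  Qp n3 *m GA *m Qp n1 + Qp n4 *m GB *m Qp n2.
Definition GM (GA GB : 'M[F2]_q) : 'M[F2]_q :=
  Qp n3 *m GA *m Qp m + Qp n4 *m GB *m Qp m.

(* A subspace X of F_2^q is represented (mxalgebra style) as the row space of
   a q x q matrix; a column vector x lies in it iff (x^T <= X)%MS, and its
   dimension is \rank X. *)
Definition inSub (X : 'M[F2]_q) (x : 'cV[F2]_q) : bool := (x^T <= X)%MS.

Definition decodable (GA GB : 'M[F2]_q) (X : 'M[F2]_q) : bool :=
  [forall xs : 'cV[F2]_q, forall xs' : 'cV[F2]_q,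
   forall xm : 'cV[F2]_q, forall xm' : 'cV[F2]_q,
     [&& inSub X xs, inSub X xs' &
        GS GA GB *m xs + GM GA GB *m xm == GS GA GB *m xs' + GM GA GB *m xm']
     ==> (xs == xs')].

Definition rate (GA GB : 'M[F2]_q) : nat :=
  (\max_(X : 'M[F2]_q | decodable GA GB X) \rank X)%N.

Definition lin_capacity : nat :=
  (\max_(GA : 'M[F2]_q) \max_(GB : 'M[F2]_q) rate GA GB)%N.

End Network.

From mathcomp Require Import all_boot all_order all_algebra.
From mathcomp Require Import zify.
Import GRing.Theory.
Local Open Scope ring_scope.

(* Since the two source links have equal gain n1 and the disturbing node is at
   least as strong, both relay inputs see the source through the same shift
   Q^(q-n1) = Q^(q-m) Q^(m-n1); hence G_S = G_M Q^(m-n1).  The disturbing node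
   can then send Q^(m-n1) x to mimic any source word x, so the receiver cannot
   tell x from 0 and no nonzero subspace is decodable. *)

Lemma mxpowD (q : nat) (A : 'M['F_2]_q) (a b : nat) :
  mxpow A (a + b) = mxpow A a *m mxpow A b.
Proof.
rewrite /mxpow; elim: a => [|a IH]; first by rewrite add0n /= mul1mx.
by rewrite addSn /= IH mulmxA.
Qed.

Section EqualSourceGains.

Variables n1 n3 n4 m : nat.
Hypothesis le_n1_m : (n1 <= m)%N.

Local Notation q := (qdim n1 n1 n3 n4 m).
Local Notation disturbance_shift := (mxpow (shiftQ q) (m - n1)).

Lemma Qp_source_split :
  Qp n1 n1 n3 n4 m n1 = Qp n1 n1 n3 n4 m m *m disturbance_shift.
Proof.
have le_m_q : (m <= q)%N by rewrite /qdim !leq_max leqnn !orbT.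
by rewrite /Qp -mxpowD; congr mxpow; lia.
Qed.

Lemma GS_eq_GM_shift (GA GB : 'M['F_2]_q) :
  GS n1 n1 n3 n4 m GA GB = GM n1 n1 n3 n4 m GA GB *m disturbance_shift.
Proof. by rewrite /GS /GM Qp_source_split mulmxDl !mulmxA. Qed.

Lemma decodable_rank0 (GA GB X : 'M['F_2]_q) :
  decodable n1 n1 n3 n4 m GA GB X -> \rank X = 0%N.
Proof.
move=> decX; apply/eqP; rewrite mxrank_eq0; apply: contraTT decX.
case/rowV0Pn=> v vX v_neq0; apply/forallP => /(_ v^T) /forallP /(_ 0).
move=> /forallP /(_ 0) /forallP /(_ (disturbance_shift *m v^T)) /implyP.
rewrite /inSub trmxK vX trmx0 sub0mx !mulmx0 addr0 add0r GS_eq_GM_shift mulmxA.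
by rewrite eqxx -trmx0 (inj_eq trmx_inj) => /(_ isT); apply/negP.
Qed.

Lemma rate_eq0 (GA GB : 'M['F_2]_q) : rate n1 n1 n3 n4 m GA GB = 0%N.
Proof. by rewrite /rate big1 // => X /decodable_rank0. Qed.

End EqualSourceGains.

Theorem mainTheorem8 (n1 n2 n3 n4 m : nat) :
  n1 = n2 -> (n1 <= m)%N ->
  (forall GA GB : 'M['F_2]_(qdim n1 n2 n3 n4 m), rate n1 n2 n3 n4 m GA GB = 0%N)
  /\ lin_capacity n1 n2 n3 n4 m = 0%N.
Proof.
move=> <- le_n1_m; split=> [GA GB|]; first exact: rate_eq0.
by rewrite /lin_capacity big1 // => GA _; rewrite big1 // => GB _; apply: rate_eq0.
Qed.
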